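(* Let $D=\{(x_1,y_1),\dots,(x_N,y_N)\}$ be a training set with $N$ samples, fix a target index $i\in\{1,\dots,N\}$, and fix a sampling size $z$ with $1\le z< N$. Let $q_\theta(y\mid x,\tilde D)\in[0,1]$ be a fixed predictor satisfying the Fitting Assumption below. Let $w_1=(p^{w_1}_1,\dots,p^{w_1}_N)$ be uniform sampling weights, $p^{w_1}_a=p_0=\frac1N$ for all $a$. For a real number $k$ with $1<k<N$, let $\lambda=\frac{1-kp_0}{1-p_0}=\frac{N-k}{N-1}$ and define new weights $w_2$ by $p^{w_2}_i=k p_0$ and $p^{w_2}_j=\lambda p_0$ for all $j\neq i$ (so $w_2$ is normalized). Define $$\lambda_B=\lambda^z\,\frac{\prod_{a=1}^{z}\bigl(1-(a-1)p_0\bigr)}{\prod_{a=1}^{z}\bigl(1-(a-1)\lambda p_0\bigr)},$$ which satisfies $0<\lambda_B<1$. If $k>(N-z)(1-\lambda_B)+1$, then $$\mathbb{E}\bigl[q_{(\theta,w_2)}(y_i\mid x_i,D)\bigr]>\mathbb{E}\bigl[q_{(\theta,w_1)}(y_i\mid x_i,D)\bigr].$$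
   Context: Fitting Assumption: for every sample $(x_i,y_i)\in D$, every training set $\tilde D$ (a collection of labeled samples), and every other sample $(x_j,y_j)\in D$, $$q_\theta\bigl(y_i\mid x_i,\tilde D\cup\{(x_i,y_i)\}\bigr)>\max\Bigl[q_\theta(y_i\mid x_i,\tilde D),\;q_\theta\bigl(y_i\mid x_i,\tilde D\cup\{(x_j,y_j)\}\bigr)\Bigr].$$ Weighted non-replacement sampling: given normalized weights $w=(p_1,\dots,p_N)$ on the samples of $D$, a subset $D^z_w\subseteq D$ of size $z$ is drawn by selecting $z$ distinct samples sequentially, where at each step a not-yet-selected sample $a$ is chosen with probability $p_a/(1-\sum_{b\text{ already selected}}p_b)$. The sampled PFN predictor is $q_{(\theta,w)}(y\mid x,D)=q_\theta(y\mid x,D^z_w)$, and the expectation $\mathbb{E}[q_{(\theta,w)}(y_i\mid x_i,D)]=\sum_{S}\Pr(D^z_w=S)\,q_\theta(y_i\mid x_i,S)$ is over the random subset $D^z_w$. *)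

From HB Require Import structures.
From mathcomp Require Import all_boot all_order all_algebra.
Set Implicit Arguments. Unset Strict Implicit. Unset Printing Implicit Defensive.
Import Order.TTheory GRing.Theory Num.Theory.
Local Open Scope ring_scope.

(* Samples of D are indexed by 'I_N; a training set drawn from D is a
   subset S : {set 'I_N}.  A predictor is q : 'I_N -> {set 'I_N} -> R with
   q j S = q_theta(y_j | x_j, {(x_a,y_a) | a in S}). *)

(* Fitting Assumption (restricted to training sets not already containing
   the sample i). *)
Definition fitting_assumption (R : realFieldType) (N : nat)
  (q : 'I_N -> {set 'I_N} -> R) : Prop :=
  forall (i : 'I_N) (S : {set 'I_N}) (j : 'I_N),
    i \notin S -> j != i ->
    Num.max (q i S) (q i (j |: S)) < q i (i |: S).

(* Probability of drawing the ordered sequence s sequentially without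
   replacement with weights w; acc is the total weight already selected. *)
Fixpoint seq_prob_aux (R : realFieldType) (N : nat) (w : 'I_N -> R)
  (acc : R) (s : seq 'I_N) : R :=
  match s with
  | [::] => 1
  | a :: s' => (w a / (1 - acc)) * seq_prob_aux w (acc + w a) s'
  end.

Definition seq_prob (R : realFieldType) (N : nat) (w : 'I_N -> R)
  (s : seq 'I_N) : R := seq_prob_aux w 0 s.

(* Pr(D^z_w = S): sum over all orderings of z distinct samples whose set is S. *)
Definition subset_prob (R : realFieldType) (N : nat) (w : 'I_N -> R)
  (z : nat) (S : {set 'I_N}) : R :=
  \sum_(t : z.-tuple 'I_N | uniq t && ([set a in t] == S)) seq_prob w t.

Definition sampled_expectation (R : realFieldType) (N : nat)
  (q : 'I_N -> {set 'I_N} -> R) (w : 'I_N -> R) (z : nat) (i : 'I_N) : R :=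
  \sum_(S : {set 'I_N}) subset_prob w z S * q i S.

Definition uniform_weights (R : realFieldType) (N : nat) : 'I_N -> R :=
  fun _ => 1 / N%:R.

Definition lambda_of (R : realFieldType) (N : nat) (k : R) : R :=
  (1 - k * (1 / N%:R)) / (1 - 1 / N%:R).

Definition reweighted (R : realFieldType) (N : nat) (i : 'I_N) (k : R)
  : 'I_N -> R :=
  fun a => if a == i then k * (1 / N%:R) else lambda_of N k * (1 / N%:R).

Definition lambda_B (R : realFieldType) (N : nat) (k : R) (z : nat) : R :=
  let p0 := 1 / N%:R in
  let lam := lambda_of N k in
  lam ^+ z * (\prod_(a < z) (1 - a%:R * p0))
           / (\prod_(a < z) (1 - a%:R * lam * p0)).

(* Every sampling weight used here is constant, say c, off the target sample i.
   Split the ordered draws of z distinct samples by whether, and at which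
   position, i is drawn.  A draw avoiding i has probability
   u(c) = prod_(j < z) c / (1 - j c), every draw with i at position m has the
   same probability f_m, and swapping two positions is a bijection between the
   draws with i at either position.  With b the number of draws starting
   with i, S_B the sum of the predictions over them, S_A the sum over the draws
   avoiding i, and M = N - z, the total probability
   1 = u(c) M b + (sum_m f_m) b eliminates the f_m and gives
     b E_w = S_B - b u(c) (M S_B - S_A).
   Replacing the head of a draw avoiding i by i and summing gives M S_B, so the
   Fitting Assumption makes the gain M S_B - S_A positive.  Upweighting i lowers
   c, hence u(c), and therefore raises E_w. *)

From mathcomp Require Import all_boot all_order all_algebra fingroup perm.
From mathcomp Require Import zify ring lra.
Import Order.TTheory GRing.Theory Num.Theory.
Local Open Scope ring_scope.
Set Implicit Arguments. Unset Strict Implicit. Unset Printing Implicit Defensive.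

Section Tuples.

Variables (T : finType) (n : nat).

Lemma sum_tuple_cons (V : nmodType) (F : n.+1.-tuple T -> V) :
  \sum_t F t = \sum_a \sum_(t : n.-tuple T) F [tuple of a :: t].
Proof.
rewrite (reindex (fun p : T * n.-tuple T => [tuple of p.1 :: p.2])) /=.
  by rewrite pair_big.
exists (fun t => (thead t, [tuple of behead t])).
  by move=> [a t] _ /=; congr pair; apply: val_inj.
by move=> t _; rewrite [in RHS](tuple_eta t).
Qed.

Lemma exists_uniq_tuple_notin (x : T) : (n < #|T|)%N ->
  exists t : n.-tuple T, uniq t && (x \notin t).
Proof.
move=> lt_n_T; have sz : size (take n (enum [set~ x])) == n.
  by rewrite size_takel // -cardE cardsC1; lia.
exists (Tuple sz); rewrite /= take_uniq ?enum_uniq //=.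
by apply/negP => /mem_take; rewrite mem_enum !inE eqxx.
Qed.

Definition permute_tuple (s : 'S_n) (t : n.-tuple T) : n.-tuple T :=
  [tuple tnth t (s j) | j < n].

Lemma permute_tupleK s : cancel (permute_tuple s) (permute_tuple s^-1%g).
Proof.
by move=> t; apply: eq_from_tnth => j; rewrite !tnth_mktuple permKV.
Qed.

Lemma perm_permute_tuple s t : perm_eq (permute_tuple s t) t.
Proof.
rewrite -[X in perm_eq _ X]map_tnth_enum /= map_comp perm_map //.
apply: uniq_perm; rewrite ?enum_uniq ?(map_inj_uniq perm_inj) ?enum_uniq //.
by move=> j; rewrite mem_enum; apply/mapP; exists (s^-1%g j); rewrite ?mem_enum ?permKV.
Qed.

Lemma sum_uniq_tuple_tnth (V : nmodType) (x : T) (g : {set T} -> V) m m' :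
  \sum_(t : n.-tuple T | uniq t && (tnth t m == x)) g [set y in t] =
  \sum_(t : n.-tuple T | uniq t && (tnth t m' == x)) g [set y in t].
Proof.
rewrite [RHS](reindex_inj (can_inj (permute_tupleK (tperm m m')))) /=.
have perm_t := perm_permute_tuple (tperm m m').
apply: eq_big => t; first by rewrite (perm_uniq (perm_t t)) tnth_mktuple tpermR.
by move=> _; congr g; apply/setP => y; rewrite !inE (perm_mem (perm_t t)).
Qed.

Lemma sum_uniq_tuple_split (V : nmodType) (x : T) (F : n.-tuple T -> V) :
  \sum_(t : n.-tuple T | uniq t) F t =
  \sum_(t : n.-tuple T | uniq t && (x \notin t)) F t +
  \sum_(m < n) \sum_(t : n.-tuple T | uniq t && (tnth t m == x)) F t.
Proof.
under [X in _ = _ + X]eq_bigr do rewrite big_mkcond.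
rewrite exchange_big big_mkcond [X in _ = X + _]big_mkcond -big_split /=.
apply: eq_bigr => t _; case ut: (uniq t) => /=; last by rewrite big1 ?addr0.
case: (boolP (x \in t)) => /= [/tnthP [m0 xm0] | x_notin_t].
  rewrite add0r (bigD1 m0) ?xm0 ?eqxx //= big1 ?addr0 // => m ne_m.
  by case: eqP => // /esym/(tuple_uniqP _ ut) e; rewrite e eqxx in ne_m.
rewrite big1 ?addr0 // => m _; case: eqP => // e.
by rewrite -e mem_tnth in x_notin_t.
Qed.

Lemma sum_uniq_tuple_notin_behead (V : nmodType) (x : T) (G : n.-tuple T -> V) :
  \sum_(t : n.+1.-tuple T | uniq t && (x \notin t)) G [tuple of behead t] =
  (\sum_(t : n.-tuple T | uniq t && (x \notin t)) G t) *+ (#|T| - n.+1).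
Proof.
rewrite big_mkcond sum_tuple_cons exchange_big -sumrMnl [RHS]big_mkcond /=.
apply: eq_bigr => t _; case ut: (uniq t); last by rewrite big1 // => a _; rewrite andbF.
case: (boolP (x \in t)) => xt /=.
  by rewrite big1 // => a _; rewrite inE xt orbT andbF.
transitivity (\sum_(a in [predC x :: t]) G t).
  rewrite [RHS]big_mkcond; apply: eq_bigr => a _.
  rewrite !inE negb_or (eq_sym x) andbT.
  by case: (a \in t); case: (a == x); rewrite //= xt; congr G; apply: val_inj.
have card_xt : #|mem (x :: t)| = n.+1 by rewrite (card_uniqP _) /= ?xt ?ut ?size_tuple.
rewrite sumr_const; congr (_ *+ _); apply/eqP; rewrite -(eqn_add2l n.+1).
by rewrite -{1}card_xt cardC subnKC // -card_xt max_card.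
Qed.

Lemma sum_uniq_tuple_head_behead (V : nmodType) (x : T) (G : n.-tuple T -> V) :
  \sum_(t : n.+1.-tuple T | uniq t && (tnth t ord0 == x)) G [tuple of behead t] =
  \sum_(t : n.-tuple T | uniq t && (x \notin t)) G t.
Proof.
rewrite big_mkcond sum_tuple_cons (bigD1 x) //= [X in _ + X]big1 ?addr0; last first.
  by move=> a ne_ax; apply: big1 => t _; rewrite (tnth_nth x) /= (negbTE ne_ax) andbF.
rewrite [RHS]big_mkcond; apply: eq_bigr => t _; rewrite (tnth_nth x) /= eqxx andbT andbC.
by case: ifP => // _; congr G; apply: val_inj.
Qed.

End Tuples.

Section Draws.

Variables (R : realFieldType) (N : nat).
Implicit Types (w : 'I_N -> R) (c : R).

Fixpoint draw_prob (acc : R) (s : seq R) : R :=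
  if s is x :: s' then x / (1 - acc) * draw_prob (acc + x) s' else 1.

Lemma seq_prob_auxE w acc s : seq_prob_aux w acc s = draw_prob acc (map w s).
Proof. by elim: s acc => //= a s IHs acc; rewrite IHs. Qed.

Lemma draw_prob_nseq c m n :
  draw_prob (m%:R * c) (nseq n c) = \prod_(m <= j < m + n) (c / (1 - j%:R * c)).
Proof.
elim: n m => [|n IHn] m /=; first by rewrite addn0 big_geq.
rewrite big_ltn ?addnS ?ltnS ?leq_addr // -addSn -IHn.
by rewrite -addn1 natrD mulrDl mul1r.
Qed.

Lemma draw_prob_nseq_lt c c' n : 0 < c' -> c' < c -> n%:R * c < 1 ->
  draw_prob 0 (nseq n.+1 c') < draw_prob 0 (nseq n.+1 c).
Proof.
move=> c'_gt0 lt_c'c nc_lt1.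
have nseqE x : draw_prob 0 (nseq n.+1 x) = \prod_(0 <= j < n.+1) (x / (1 - j%:R * x)).
  by have := draw_prob_nseq x 0 n.+1; rewrite mul0r.
rewrite !nseqE; apply: ltr_prod_nat => // j /andP [_ lt_jn].
have jc_le : j%:R * c <= n%:R * c by rewrite ler_pM2r ?(lt_trans c'_gt0) ?ler_nat.
have jc'_le : j%:R * c' <= j%:R * c by apply: ler_wpM2l; rewrite ?ler0n ?ltW.
have den_gt0 : 0 < 1 - j%:R * c by rewrite subr_gt0 (le_lt_trans jc_le).
have den'_gt0 : 0 < 1 - j%:R * c' by rewrite subr_gt0 (le_lt_trans jc'_le) ?(le_lt_trans jc_le).
rewrite divr_ge0 ?ltW //= ltr_pdivrMr // mulrAC ltr_pdivlMr //.
rewrite !mulrBr !mulr1 mulrCA; lra.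
Qed.

Section Normalized.

Variable w : 'I_N -> R.
Hypotheses (w_gt0 : forall a, 0 < w a) (w_sum1 : \sum_a w a = 1).

Lemma sum_weight_setC (X : {set 'I_N}) :
  \sum_(a in ~: X) w a = 1 - \sum_(a in X) w a.
Proof.
rewrite -w_sum1 [in RHS](bigID (mem X)) /= addrAC subrr add0r.
by apply: eq_bigl => a; rewrite inE.
Qed.

Lemma sum_seq_prob_aux_notin n (X : {set 'I_N}) : (n <= #|~: X|)%N ->
  \sum_(t : n.-tuple 'I_N | uniq t && all [predC X] t)
     seq_prob_aux w (\sum_(a in X) w a) t = 1.
Proof.
elim: n X => [|n IHn] X le_n_X.
  by rewrite (big_pred1 [tuple]) // => t; rewrite tuple0.
have /card_gt0P [a0 a0_notin_X] := leq_ltn_trans (leq0n n) le_n_X.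
have rest_gt0 : 0 < 1 - \sum_(a in X) w a.
  rewrite -sum_weight_setC (bigD1 a0) //= ltr_pwDl //.
  by apply: sumr_ge0 => a _; apply: ltW.
rewrite big_mkcond sum_tuple_cons -[RHS](divff (lt0r_neq0 rest_gt0)).
rewrite -{1}sum_weight_setC mulr_suml [RHS]big_mkcond; apply: eq_bigr => a _ /=.
rewrite inE; case: (boolP (a \in X)) => aX /=; first by rewrite big1 // => t; rewrite andbF.
have le_n_aX : (n <= #|~: (a |: X)|)%N.
  have -> : ~: (a |: X) = ~: X :\ a by apply/setP => b; rewrite !inE negb_or andbC.
  by rewrite (cardsD1 a) inE aX in le_n_X.
rewrite -[RHS]mulr1 -[in X in _ = _ * X](IHn _ le_n_aX) big_setU1 //= [w a + _]addrC.
rewrite mulr_sumr [RHS]big_mkcond /=.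
apply: eq_bigr => t _; have -> : all [predC a |: X] t = (a \notin t) && all [predC X] t.
  by rewrite -has_pred1 -all_predC -all_predI; apply: eq_all => b; rewrite !inE negb_or.
by case: (a \notin t); case: (uniq t); case: (all [predC X] t) => //=.
Qed.

Lemma sum_seq_prob n : (n <= N)%N ->
  \sum_(t : n.-tuple 'I_N | uniq t) seq_prob w t = 1.
Proof.
move=> le_nN; have := @sum_seq_prob_aux_notin n set0.
rewrite setC0 cardsT card_ord big_set0 => /(_ le_nN) <-.
apply: eq_bigl => t; have -> : all [predC set0] t by apply/allP => a; rewrite !inE.
by rewrite andbT.
Qed.

End Normalized.

Lemma sampled_expectationE (q : 'I_N -> {set 'I_N} -> R) w z i :
  sampled_expectation q w z i =
  \sum_(t : z.-tuple 'I_N | uniq t) seq_prob w t * q i [set x in t].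
Proof.
rewrite /sampled_expectation /subset_prob.
under eq_bigr do rewrite mulr_suml big_mkcond.
rewrite exchange_big [RHS]big_mkcond /=; apply: eq_bigr => t _.
case: (uniq t) => /=; last by rewrite big1.
rewrite (bigD1 [set x in t]) //= eqxx big1 ?addr0 // => S ne_S.
by rewrite eq_sym (negbTE ne_S).
Qed.

End Draws.

Section ConstantOffTarget.

Variables (R : realFieldType) (N : nat) (i : 'I_N) (w : 'I_N -> R) (c : R).
Hypothesis w_const : forall a, a != i -> w a = c.

Lemma seq_prob_notin n (t : n.-tuple 'I_N) :
  i \notin t -> seq_prob w t = draw_prob 0 (nseq n c).
Proof.
move=> i_notin_t; rewrite /seq_prob seq_prob_auxE.
have /all_pred1P -> : all (pred1 c) (map w t).
  by rewrite all_map; apply/allP => a a_in_t /=; rewrite w_const ?(memPn i_notin_t).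
by rewrite size_map size_tuple.
Qed.

Lemma seq_prob_tnth n m (t : n.-tuple 'I_N) : uniq t -> tnth t m = i ->
  seq_prob w t = draw_prob 0 [seq if j == m then w i else c | j <- enum 'I_n].
Proof.
move=> /tuple_uniqP t_inj tm_i; rewrite /seq_prob seq_prob_auxE -map_tnth_enum -map_comp.
congr draw_prob; apply: eq_map => j /=.
have [-> | ne_jm] := eqVneq j m; first by rewrite tm_i.
by rewrite w_const //; apply: contra ne_jm => /eqP; rewrite -tm_i => /t_inj ->.
Qed.

Lemma sum_seq_prob_split n (g : {set 'I_N} -> R) :
  \sum_(t : n.+1.-tuple 'I_N | uniq t) seq_prob w t * g [set x in t] =
  draw_prob 0 (nseq n.+1 c) *
    \sum_(t : n.+1.-tuple 'I_N | uniq t && (i \notin t)) g [set x in t] +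
  (\sum_(m < n.+1) draw_prob 0 [seq if j == m then w i else c | j <- enum 'I_n.+1]) *
    \sum_(t : n.+1.-tuple 'I_N | uniq t && (tnth t ord0 == i)) g [set x in t].
Proof.
rewrite (sum_uniq_tuple_split i) mulr_sumr mulr_suml; congr (_ + _).
  by apply: eq_bigr => t /andP [_ i_notin_t]; rewrite seq_prob_notin.
apply: eq_bigr => m _; rewrite -(sum_uniq_tuple_tnth i g m) mulr_sumr.
by apply: eq_bigr => t /andP [ut /eqP tm_i]; rewrite (seq_prob_tnth ut tm_i).
Qed.

Hypothesis w_sum1 : \sum_a w a = 1.

Lemma weight_off_target : N.-1%:R * c = 1 - w i.
Proof.
rewrite -[in RHS]w_sum1 (bigD1 i) //= addrC addrK (eq_bigr (fun=> c)) //.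
by rewrite sumr_const cardC1 card_ord mulr_natl.
Qed.

End ConstantOffTarget.

Lemma fitting_assumption_cons_behead (R : realFieldType) N
    (q : 'I_N -> {set 'I_N} -> R) n (i : 'I_N) (t : n.+1.-tuple 'I_N) :
  fitting_assumption q -> i \notin t ->
  q i [set x in t] < q i [set x in i :: behead t].
Proof.
rewrite [in i \notin t](tuple_eta t) inE negb_or eq_sym => fit /andP [ne_t0i i_notin_bt].
have i_notin_S : i \notin [set x in behead t] by rewrite inE.
rewrite [in X in q i X < _](tuple_eta t) /= !set_cons.
by have := fit i _ _ i_notin_S ne_t0i; rewrite gt_max => /andP [_ ->].
Qed.

Section Comparison.

Variables (R : realFieldType) (N n : nat) (i : 'I_N) (q : 'I_N -> {set 'I_N} -> R).
Hypotheses (fit : fitting_assumption q) (lt_nN : (n.+1 < N)%N).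

Let head_sum (g : {set 'I_N} -> R) :=
  \sum_(t : n.+1.-tuple 'I_N | uniq t && (tnth t ord0 == i)) g [set x in t].
Let notin_sum (g : {set 'I_N} -> R) :=
  \sum_(t : n.+1.-tuple 'I_N | uniq t && (i \notin t)) g [set x in t].
Let gain := (N - n.+1)%:R * head_sum (q i) - notin_sum (q i).

Lemma head_sum_behead (g : {set 'I_N} -> R) :
  head_sum g = \sum_(t : n.-tuple 'I_N | uniq t && (i \notin t)) g [set x in i :: t].
Proof.
rewrite -(sum_uniq_tuple_head_behead _ (fun t : n.-tuple _ => g [set x in i :: t])).
apply: eq_bigr => t /andP [_ /eqP t0_i].
by rewrite [in LHS](tuple_eta t) /= -t0_i.
Qed.

Lemma notin_sum_const (g : {set 'I_N} -> R) a :
  (forall S, g S = a) -> notin_sum g = (N - n.+1)%:R * head_sum g.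
Proof.
move=> g_const; rewrite head_sum_behead mulr_natl.
have := sum_uniq_tuple_notin_behead i (fun t : n.-tuple _ => g [set x in i :: t]).
by rewrite card_ord => <-; apply: eq_bigr => t _; rewrite !g_const.
Qed.

Lemma gain_gt0 : 0 < gain.
Proof.
rewrite /gain head_sum_behead mulr_natl.
have := sum_uniq_tuple_notin_behead i (fun t : n.-tuple _ => q i [set x in i :: t]).
rewrite card_ord => <-; rewrite subr_gt0 /notin_sum.
have [t0 /andP [ut0 i_notin_t0]] : exists t : n.+1.-tuple _, uniq t && (i \notin t).
  by apply: exists_uniq_tuple_notin; rewrite card_ord.
apply: ltr_sum; first by apply/hasP; exists t0; rewrite ?mem_index_enum ?ut0.
by move=> t /andP [_ i_notin_t]; apply: fitting_assumption_cons_behead.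
Qed.

Lemma head_count_gt0 : 0 < head_sum (fun=> 1).
Proof.
rewrite head_sum_behead.
have [t0 t0_ok] : exists t : n.-tuple _, uniq t && (i \notin t).
  by apply: exists_uniq_tuple_notin; rewrite card_ord ltnW.
by rewrite (bigD1 t0) //= ltr_pwDl ?ltr01 // sumr_ge0.
Qed.

Lemma sampled_expectation_const_off (w : 'I_N -> R) c :
  (forall a, 0 < w a) -> \sum_a w a = 1 -> (forall a, a != i -> w a = c) ->
  head_sum (fun=> 1) * sampled_expectation q w n.+1 i =
  head_sum (q i) - head_sum (fun=> 1) * draw_prob 0 (nseq n.+1 c) * gain.
Proof.
move=> w_gt0 w_sum1 w_const.
have total := sum_seq_prob_split w_const n (fun=> 1).
rewrite (eq_bigr _ (fun t _ => mulr1 _)) (sum_seq_prob w_gt0 w_sum1 (ltnW lt_nN)) in total.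
rewrite -/(head_sum (fun=> 1)) -/(notin_sum (fun=> 1)) (notin_sum_const (a := 1)) // in total.
rewrite sampled_expectationE (sum_seq_prob_split w_const) -/(head_sum (q i)) -/(notin_sum (q i)) /gain.
set F := \sum_(m < n.+1) _ in total *.
by rewrite -[X in _ = X - _]mulr1 [X in _ = _ * X - _]total; ring.
Qed.

Theorem sampled_expectation_lt_const_off (w w' : 'I_N -> R) c c' :
  (forall a, 0 < w a) -> \sum_a w a = 1 -> (forall a, a != i -> w a = c) ->
  (forall a, 0 < w' a) -> \sum_a w' a = 1 -> (forall a, a != i -> w' a = c') ->
  c' < c -> sampled_expectation q w n.+1 i < sampled_expectation q w' n.+1 i.
Proof.
move=> w_gt0 w_sum1 w_c w'_gt0 w'_sum1 w'_c lt_c'c.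
have c'_gt0 : 0 < c'.
  have /card_gt0P [a] : (0 < #|[set~ i]|)%N by rewrite cardsC1 card_ord; lia.
  by rewrite !inE => /w'_c <-.
have nc_lt1 : n%:R * c < 1.
  apply: le_lt_trans (_ : N.-1%:R * c < 1).
    by rewrite ler_pM2r ?(lt_trans c'_gt0) // ler_nat; lia.
  by rewrite (weight_off_target w_c w_sum1) ltrBlDr ltrDl.
rewrite -(ltr_pM2l head_count_gt0) (sampled_expectation_const_off w_gt0 w_sum1 w_c).
rewrite (sampled_expectation_const_off w'_gt0 w'_sum1 w'_c).
by rewrite ltrD2l ltrN2 ltr_pM2r ?gain_gt0 // ltr_pM2l ?head_count_gt0 ?draw_prob_nseq_lt.
Qed.

End Comparison.

Section Reweighting.

Variables (R : realFieldType) (N : nat) (k : R).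
Hypotheses (lt1N : (1 < N)%N) (k_gt1 : 1 < k) (k_ltN : k < N%:R).

Let N_gt1 : 1 < N%:R :> R. Proof. by rewrite ltr1n. Qed.
Let N_gt0 : 0 < N%:R :> R. Proof. exact: lt_trans N_gt1. Qed.

Lemma uniform_weights_gt0 (a : 'I_N) : 0 < @uniform_weights R N a.
Proof. by rewrite /uniform_weights divr_gt0. Qed.

Lemma sum_uniform_weights : \sum_a @uniform_weights R N a = 1.
Proof.
by rewrite sumr_const card_ord /uniform_weights -(mulr_natr (1 / N%:R)) mul1r mulVf ?lt0r_neq0.
Qed.

Lemma lambda_ofE : lambda_of N k = (N%:R - k) / (N%:R - 1).
Proof.
rewrite /lambda_of; field.
by rewrite subr_eq0 !gt_eqF.
Qed.

Lemma lambda_of_gt0 : 0 < lambda_of N k.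
Proof. by rewrite lambda_ofE divr_gt0 ?subr_gt0. Qed.

Lemma lambda_of_lt1 : lambda_of N k < 1.
Proof. by rewrite lambda_ofE ltr_pdivrMr ?subr_gt0 // mul1r ltrD2l ltrN2. Qed.

Lemma reweighted_gt0 (i a : 'I_N) : 0 < reweighted i k a.
Proof.
have p0_gt0 : 0 < 1 / N%:R :> R by rewrite divr_gt0.
rewrite /reweighted; case: eqP => _; apply: mulr_gt0 => //; last exact: lambda_of_gt0.
exact: lt_trans k_gt1.
Qed.

Lemma sum_reweighted (i : 'I_N) : \sum_a reweighted i k a = 1.
Proof.
rewrite (bigD1 i) //= {1}/reweighted eqxx (eq_bigr (fun=> lambda_of N k * (1 / N%:R))).
  rewrite sumr_const cardC1 card_ord -(mulr_natr (lambda_of N k * _)) lambda_ofE.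
  rewrite -subn1 natrB //; last exact: ltnW.
  by field; rewrite subr_eq0 !gt_eqF.
by move=> a /negbTE ne_ai; rewrite /reweighted ne_ai.
Qed.

End Reweighting.

Unset Implicit Arguments.

Theorem lemma1 (R : realFieldType) (N : nat) (q : 'I_N -> {set 'I_N} -> R)
  (i : 'I_N) (z : nat) (k : R) :
  (1 <= z)%N -> (z < N)%N ->
  (forall j S, 0 <= q j S <= 1) ->
  fitting_assumption q ->
  1 < k -> k < N%:R ->
  k > (N - z)%N%:R * (1 - lambda_B N k z) + 1 ->
  sampled_expectation q (reweighted i k) z i >
  sampled_expectation q (@uniform_weights R N) z i.
Proof.
case: z => [//|n] _ lt_zN _ fit k_gt1 k_ltN _.
have lt1N : (1 < N)%N by apply: leq_ltn_trans lt_zN.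
apply: (sampled_expectation_lt_const_off fit lt_zN (c := 1 / N%:R)).
- exact: uniform_weights_gt0.
- exact: sum_uniform_weights.
- by [].
- exact: reweighted_gt0.
- exact: sum_reweighted.
- by move=> a /negbTE ne_ai; rewrite /reweighted ne_ai.
- by rewrite gtr_pMl ?divr_gt0 ?ltr0n ?(ltn_trans _ lt1N) ?lambda_of_lt1.
Qed.
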